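(* Let $(X,d)$ be a complete metric space and let $f:\ell_\infty(X)\to X$ satisfy $L_{s,q}(f)<1$ for some $q\in(0,1)$; let $x_*$ be the generalized contractive fixed point of $f$. Fix $x\in X$ and for $n\in\mathbb{N}$ define $f_n:X^n\to X$ by $f_n(x_0,\dots,x_{n-1}):=f(x_0,\dots,x_{n-1},x,x,\dots)$. Then for every $n\in\mathbb{N}$, the Lipschitz constant of $f_n$ with respect to the maximum metric $d_n((x_0,\dots,x_{n-1}),(y_0,\dots,y_{n-1}))=\max_{i<n}d(x_i,y_i)$ on $X^n$ satisfies $\mathrm{Lip}(f_n)\le L_{s,q}(f)$; consequently $f_n$ has a unique point $x_*^n\in X$ with $f_n(x_*^n,\dots,x_*^n)=x_*^n$, and $$d(x_*^n,x_* )\le q^n\frac{L_{s,q}(f)}{1-L_{s,q}(f)}\,d(x_*,x).$$ In particular $x_*^n\to x_*$.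
   Context: $\mathbb{N}^*=\{0,1,2,\dots\}$; $\ell_\infty(X)$ is the set of all bounded sequences $(x_n)_{n\in\mathbb{N}^*}$ in $X$. For $q\in(0,1)$, $d_{s,q}(x,y):=\sup\{q^n d(x_n,y_n):n\in\mathbb{N}^*\}$ and $L_{s,q}(f)$ is the Lipschitz constant of $f$ with respect to $d_{s,q}$ on $\ell_\infty(X)$ and $d$ on $X$. A point $x_*\in X$ is a generalized fixed point of $f$ if $f(x_*,x_*,\dots)=x_*$; a generalized contractive fixed point is one to which, for every starting $x\in\ell_\infty(X)$, the generalized iterates $x^k:=f(\tilde x^{k-1})$, $\tilde x^k:=(f(\tilde x^{k-1}),\tilde x^{k-1}_0,\tilde x^{k-1}_1,\dots)$, $\tilde x^0:=x$, converge (under the hypothesis it exists and is unique). *)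

From Stdlib Require Import Reals Lra Lia Classical ClassicalEpsilon.
Open Scope R_scope.

Definition is_metric {X : Type} (d : X -> X -> R) : Prop :=
  (forall x y, 0 <= d x y) /\
  (forall x y, d x y = 0 <-> x = y) /\
  (forall x y, d x y = d y x) /\
  (forall x y z, d x z <= d x y + d y z).

Definition cauchy_seq {X : Type} (d : X -> X -> R) (u : nat -> X) : Prop :=
  forall eps, 0 < eps -> exists N, forall m n, (N <= m)%nat -> (N <= n)%nat ->
    d (u m) (u n) < eps.

Definition converges_to {X : Type} (d : X -> X -> R) (u : nat -> X) (l : X) : Prop :=
  forall eps, 0 < eps -> exists N, forall n, (N <= n)%nat -> d (u n) l < eps.

Definition complete {X : Type} (d : X -> X -> R) : Prop :=
  forall u, cauchy_seq d u -> exists l, converges_to d u l.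

(* membership in ell_infinity(X): bounded sequences *)
Definition bounded_seq {X : Type} (d : X -> X -> R) (x : nat -> X) : Prop :=
  exists M, forall n m, d (x n) (x m) <= M.

(* supremum of a set of reals (0 if the set is empty or unbounded) *)
Definition Rsup (E : R -> Prop) : R :=
  match excluded_middle_informative (bound E /\ exists r, E r) with
  | left H => proj1_sig (completeness E (proj1 H) (proj2 H))
  | right _ => 0
  end.

Definition dsq {X : Type} (d : X -> X -> R) (q : R) (x y : nat -> X) : R :=
  Rsup (fun r => exists n, r = q ^ n * d (x n) (y n)).

Definition lipschitz_with {A B : Type} (P : A -> Prop) (dA : A -> A -> R)
  (dB : B -> B -> R) (g : A -> B) (K : R) : Prop :=
  0 <= K /\ forall a b, P a -> P b -> dB (g a) (g b) <= K * dA a b.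

Definition is_lip_const {A B : Type} (P : A -> Prop) (dA : A -> A -> R)
  (dB : B -> B -> R) (g : A -> B) (L : R) : Prop :=
  lipschitz_with P dA dB g L /\
  forall K, lipschitz_with P dA dB g K -> L <= K.

(* L_{s,q}(f), for f : ell_infinity(X) -> X (values of f outside ell_infinity
   are irrelevant) *)
Definition is_Lsq {X : Type} (d : X -> X -> R) (q : R) (f : (nat -> X) -> X)
  (L : R) : Prop :=
  is_lip_const (bounded_seq d) (dsq d q) d f L.

Definition scons {X : Type} (a : X) (x : nat -> X) : nat -> X :=
  fun n => match n with O => a | S k => x k end.

Fixpoint gen_tilde {X : Type} (f : (nat -> X) -> X) (x : nat -> X) (k : nat)
  : nat -> X :=
  match k with
  | O => x
  | S k' => scons (f (gen_tilde f x k')) (gen_tilde f x k')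
  end.

(* x^k := f(tilde x^{k-1}), k >= 1; indexed here by k' = k-1 *)
Definition gen_iter {X : Type} (f : (nat -> X) -> X) (x : nat -> X) (k : nat) : X :=
  f (gen_tilde f x k).

Definition gen_fixed_point {X : Type} (f : (nat -> X) -> X) (xs : X) : Prop :=
  f (fun _ => xs) = xs.

Definition gen_contractive_fixed_point {X : Type} (d : X -> X -> R)
  (f : (nat -> X) -> X) (xs : X) : Prop :=
  gen_fixed_point f xs /\
  forall x, bounded_seq d x -> converges_to d (gen_iter f x) xs.

(* Points of X^n are represented by sequences v : nat -> X of which only the
   entries v 0, ..., v (n-1) matter. *)
Definition fn {X : Type} (f : (nat -> X) -> X) (x : X) (n : nat)
  (v : nat -> X) : X :=
  f (fun i => if Nat.ltb i n then v i else x).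

Fixpoint dmax {X : Type} (d : X -> X -> R) (n : nat) (v w : nat -> X) : R :=
  match n with
  | O => 0
  | S k => Rmax (dmax d k v w) (d (v k) (w k))
  end.

(* Restricted to sequences frozen to x from index n on, the weights q^i <= 1
   of d_{s,q} make f_n L-Lipschitz for the maximum metric, so Banach's theorem
   gives its fixed point y.  Comparing (y, ..., y, x, x, ...) with the constant
   sequence at xstar in d_{s,q}, the first n entries contribute d(y, xstar) and
   the tail at most q^n d(x, xstar); the contraction inequality
   d(y, xstar) <= L max(d(y, xstar), q^n d(x, xstar)) absorbs the first term. *)

From Stdlib Require Import Reals Lra Lia ClassicalEpsilon.
Open Scope R_scope.

Lemma pow_le_pow_le_1 (q : R) (m n : nat) :
  0 <= q <= 1 -> (m <= n)%nat -> q ^ n <= q ^ m.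
Proof.
  intros Hq Hmn. replace n with (m + (n - m))%nat by lia. rewrite pow_add.
  assert (q ^ (n - m) <= 1) by (rewrite <- (pow1 (n - m)); apply pow_incr; lra).
  pose proof (pow_le q m (proj1 Hq)). nra.
Qed.

Lemma geometric_eventually_lt (q C eps : R) :
  0 <= q < 1 -> 0 <= C -> 0 < eps -> exists N, forall n, (N <= n)%nat -> q ^ n * C < eps.
Proof.
  intros Hq HC Heps.
  assert (Hy : 0 < eps / (C + 1)) by (apply Rdiv_lt_0_compat; lra).
  destruct (pow_lt_1_zero q ltac:(rewrite Rabs_pos_eq; lra) _ Hy) as [N HN].
  exists N. intros n Hn. specialize (HN n Hn).
  rewrite Rabs_pos_eq in HN by (apply pow_le; lra).
  pose proof (pow_le q n (proj1 Hq)).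
  apply Rle_lt_trans with (q ^ n * (C + 1)); [nra|].
  apply Rlt_le_trans with (eps / (C + 1) * (C + 1)); [apply Rmult_lt_compat_r; lra|].
  right. field. lra.
Qed.

(* If [a <= L max(a, b)] with [L < 1], the alternative [a <= L a] forces [a = 0]. *)
Lemma contraction_max_bound (L a b : R) :
  0 <= L < 1 -> 0 <= a -> 0 <= b -> a <= L * Rmax a b -> a <= L * b.
Proof.
  intros HL Ha Hb H. unfold Rmax in H. destruct (Rle_dec a b); [exact H|].
  assert (a = 0) by nra. subst a. nra.
Qed.

Lemma Rsup_le_ub (E : R -> Prop) (M : R) :
  (exists r, E r) -> (forall r, E r -> r <= M) -> Rsup E <= M.
Proof.
  intros Hne Hub. unfold Rsup. destruct excluded_middle_informative as [H|H].
  - destruct (completeness E _ _) as [m [Hm Hlub]]. exact (Hlub M Hub).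
  - exfalso. apply H. split; [exists M; exact Hub | exact Hne].
Qed.

Lemma glb_exists (E : R -> Prop) (m0 : R) :
  (exists r, E r) -> (forall r, E r -> m0 <= r) ->
  exists m, (forall r, E r -> m <= r) /\ (forall m', (forall r, E r -> m' <= r) -> m' <= m).
Proof.
  intros [r0 Hr0] Hlb.
  assert (Hb : bound (fun r => E (- r))).
  { exists (- m0). intros r Hr. specialize (Hlb _ Hr). lra. }
  assert (Hne : exists r, E (- r)) by (exists (- r0); rewrite Ropp_involutive; exact Hr0).
  destruct (completeness _ Hb Hne) as [M [Hub Hlub]].
  exists (- M). split.
  - intros r Hr. assert (- r <= M) by (apply Hub; rewrite Ropp_involutive; exact Hr). lra.
  - intros m' Hm'. assert (M <= - m') by (apply Hlub; intros r Hr; specialize (Hm' _ Hr); lra).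
    lra.
Qed.

(* The infimum of all Lipschitz constants is itself one: test it against the
   ratio [dB (g a) (g b) / dA a b], which is below every Lipschitz constant. *)
Lemma is_lip_const_exists {A B : Type} (P : A -> Prop) (dA : A -> A -> R)
  (dB : B -> B -> R) (g : A -> B) (K : R) :
  (forall a b, 0 <= dA a b) -> (forall a b, 0 <= dB a b) ->
  lipschitz_with P dA dB g K -> exists L, is_lip_const P dA dB g L /\ L <= K.
Proof.
  intros HdA HdB HK.
  destruct (glb_exists (lipschitz_with P dA dB g) 0) as [m [Hlb Hglb]].
  { exists K. exact HK. }
  { intros K' [HK' _]. exact HK'. }
  assert (Hm0 : 0 <= m) by (apply Hglb; intros K' [HK' _]; exact HK').
  exists m. split; [split; [split|] |].
  - exact Hm0.
  - intros a b Ha Hb. destruct (Req_dec (dA a b) 0) as [H0|H0].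
    + destruct HK as [_ HK]. specialize (HK a b Ha Hb).
      pose proof (HdB (g a) (g b)). rewrite H0 in *. nra.
    + assert (Hpos : 0 < dA a b) by (pose proof (HdA a b); lra).
      assert (Hratio : dB (g a) (g b) / dA a b <= m).
      { apply Hglb. intros K' [_ HK']. specialize (HK' a b Ha Hb).
        apply Rmult_le_reg_r with (dA a b); [exact Hpos|].
        unfold Rdiv. rewrite Rmult_assoc, Rinv_l, Rmult_1_r by lra. exact HK'. }
      apply Rmult_le_reg_r with (/ dA a b); [apply Rinv_0_lt_compat; exact Hpos|].
      rewrite Rmult_assoc, Rinv_r by lra. rewrite Rmult_1_r. exact Hratio.
  - exact Hlb.
  - exact (Hlb K HK).
Qed.

Lemma metric_dist_refl {X : Type} (d : X -> X -> R) (a : X) : is_metric d -> d a a = 0.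
Proof. intros [_ [Hz _]]. apply Hz. reflexivity. Qed.

Section Contraction.

Variables (X : Type) (d : X -> X -> R).
Hypothesis Hmet : is_metric d.
Variables (g : X -> X) (K : R).
Hypotheses (HK0 : 0 <= K) (HK1 : K < 1).
Hypothesis Hg : forall a b, d (g a) (g b) <= K * d a b.

Lemma iter_dist_from_start (x0 : X) (p : nat) :
  d x0 (Nat.iter p g x0) <= d x0 (g x0) / (1 - K).
Proof.
  pose proof Hmet as [Hnn [_ [_ Ht]]].
  assert (HD : 0 <= d x0 (g x0)) by apply Hnn.
  induction p as [|p IH]; simpl.
  - rewrite (metric_dist_refl d _ Hmet).
    apply Rmult_le_pos; [exact HD | left; apply Rinv_0_lt_compat; lra].
  - apply Rle_trans with (d x0 (g x0) + d (g x0) (g (Nat.iter p g x0))); [apply Ht|].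
    pose proof (Hg x0 (Nat.iter p g x0)).
    apply Rle_trans with (d x0 (g x0) + K * (d x0 (g x0) / (1 - K))); [nra|].
    right. field. lra.
Qed.

Lemma iter_dist (x0 : X) (m p : nat) :
  d (Nat.iter m g x0) (Nat.iter (m + p) g x0) <= K ^ m * (d x0 (g x0) / (1 - K)).
Proof.
  induction m as [|m IH]; simpl.
  - rewrite Rmult_1_l. apply iter_dist_from_start.
  - eapply Rle_trans; [apply Hg|]. rewrite Rmult_assoc. apply Rmult_le_compat_l; assumption.
Qed.

Lemma iter_cauchy (x0 : X) : cauchy_seq d (fun k => Nat.iter k g x0).
Proof.
  pose proof Hmet as [Hnn [_ [Hs _]]].
  intros eps Heps.
  assert (HC : 0 <= d x0 (g x0) / (1 - K)).
  { apply Rmult_le_pos; [apply Hnn | left; apply Rinv_0_lt_compat; lra]. }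
  destruct (geometric_eventually_lt K _ eps ltac:(lra) HC Heps) as [N HN].
  assert (Hle : forall m n, (N <= m)%nat -> (m <= n)%nat ->
            d (Nat.iter m g x0) (Nat.iter n g x0) < eps).
  { intros m n Hm Hmn. replace n with (m + (n - m))%nat by lia.
    eapply Rle_lt_trans; [apply iter_dist | exact (HN m Hm)]. }
  exists N. intros m n Hm Hn. destruct (Nat.le_gt_cases m n).
  - exact (Hle m n Hm H).
  - rewrite Hs. apply Hle; lia.
Qed.

(* The limit [l] is fixed since [d (g l) l <= K d l u_N + d u_(N+1) l]. *)
Lemma contraction_has_fixed_point : complete d -> X -> exists y, g y = y.
Proof.
  intros Hcomp x0. pose proof Hmet as [Hnn [Hz [Hs Ht]]].
  set (u := fun k => Nat.iter k g x0).
  destruct (Hcomp u (iter_cauchy x0)) as [l Hl].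
  exists l. apply Hz.
  destruct (Rle_lt_dec (d (g l) l) 0) as [H0|Hpos]; [pose proof (Hnn (g l) l); lra|].
  exfalso.
  destruct (Hl (d (g l) l / 2) ltac:(lra)) as [N HN].
  pose proof (HN N (le_n _)). pose proof (HN (S N) (le_S _ _ (le_n _))).
  pose proof (Ht (g l) (u (S N)) l).
  assert (d (g l) (u (S N)) <= K * d (u N) l) by (rewrite (Hs (u N)); apply Hg).
  pose proof (Hnn (u N) l). nra.
Qed.

Lemma contraction_fixed_point_unique (a b : X) : g a = a -> g b = b -> a = b.
Proof.
  intros Ha Hb. pose proof Hmet as [Hnn [Hz _]]. apply Hz.
  pose proof (Hg a b) as H. rewrite Ha, Hb in H. pose proof (Hnn a b). nra.
Qed.

End Contraction.

Section Truncation.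

Variables (X : Type) (d : X -> X -> R).
Hypothesis Hmet : is_metric d.
Variables (f : (nat -> X) -> X) (q L : R) (x : X).
Hypotheses (Hq0 : 0 < q) (Hq1 : q < 1).
Hypothesis Hf : lipschitz_with (bounded_seq d) (dsq d q) d f L.

Definition pad (n : nat) (v : nat -> X) : nat -> X :=
  fun i => if Nat.ltb i n then v i else x.

Lemma fn_pad (n : nat) (v : nat -> X) : fn f x n v = f (pad n v).
Proof. reflexivity. Qed.

Lemma dsq_le_ub (s t : nat -> X) (M : R) :
  (forall i, q ^ i * d (s i) (t i) <= M) -> dsq d q s t <= M.
Proof.
  intros H. apply Rsup_le_ub.
  - exists (q ^ 0 * d (s 0%nat) (t 0%nat)), 0%nat. reflexivity.
  - intros r [i ->]. apply H.
Qed.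

Lemma dmax_ge0 (n : nat) (v w : nat -> X) : 0 <= dmax d n v w.
Proof.
  induction n as [|n IH]; simpl; [lra|]. eapply Rle_trans; [exact IH | apply Rmax_l].
Qed.

Lemma dmax_ge_dist (n i : nat) (v w : nat -> X) : (i < n)%nat -> d (v i) (w i) <= dmax d n v w.
Proof.
  induction n as [|n IH]; intros Hi; simpl; [lia|].
  destruct (Nat.eq_dec i n) as [->|Hne]; [apply Rmax_r|].
  eapply Rle_trans; [apply IH; lia | apply Rmax_l].
Qed.

Lemma dmax_const (n : nat) (a b : X) : (1 <= n)%nat -> dmax d n (fun _ => a) (fun _ => b) = d a b.
Proof.
  intros Hn. pose proof Hmet as [Hnn _].
  destruct n as [|n]; [lia|]. clear Hn. induction n as [|n IH]; simpl in *.
  - apply Rmax_right. apply Hnn.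
  - rewrite IH. apply Rmax_left. lra.
Qed.

Lemma pad_bounded (n : nat) (v : nat -> X) : bounded_seq d (pad n v).
Proof.
  pose proof Hmet as [_ [_ [Hs Ht]]].
  assert (Hx : forall i, d (pad n v i) x <= dmax d n v (fun _ => x)).
  { intros i. unfold pad. destruct (Nat.ltb i n) eqn:E.
    - apply Nat.ltb_lt in E. exact (dmax_ge_dist n i v (fun _ => x) E).
    - rewrite (metric_dist_refl d _ Hmet). apply dmax_ge0. }
  exists (2 * dmax d n v (fun _ => x)). intros i j.
  eapply Rle_trans; [apply (Ht _ x)|]. rewrite (Hs x). pose proof (Hx i). pose proof (Hx j). lra.
Qed.

Lemma dsq_pad_le_dmax (n : nat) (v w : nat -> X) : dsq d q (pad n v) (pad n w) <= dmax d n v w.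
Proof.
  pose proof Hmet as [Hnn _].
  apply dsq_le_ub. intros i. unfold pad. destruct (Nat.ltb i n) eqn:E.
  - apply Nat.ltb_lt in E. pose proof (dmax_ge_dist n i v w E).
    pose proof (pow_le_pow_le_1 q 0 i ltac:(lra) (Nat.le_0_l i)). simpl in *.
    pose proof (pow_le q i ltac:(lra)). pose proof (Hnn (v i) (w i)). nra.
  - rewrite (metric_dist_refl d _ Hmet), Rmult_0_r. apply dmax_ge0.
Qed.

Lemma fn_lipschitz (n : nat) (v w : nat -> X) : d (fn f x n v) (fn f x n w) <= L * dmax d n v w.
Proof.
  destruct Hf as [HL0 Hlip]. rewrite !fn_pad.
  eapply Rle_trans; [apply Hlip; apply pad_bounded|].
  apply Rmult_le_compat_l; [exact HL0 | apply dsq_pad_le_dmax].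
Qed.

Lemma fn_diag_contraction (n : nat) (a b : X) : (1 <= n)%nat ->
  d (fn f x n (fun _ => a)) (fn f x n (fun _ => b)) <= L * d a b.
Proof. intros Hn. rewrite <- (dmax_const n a b Hn). apply fn_lipschitz. Qed.

(* The first [n] entries have weight [q^i <= 1], the tail weight [q^i <= q^n]. *)
Lemma dsq_pad_const_le (n : nat) (y z : X) :
  dsq d q (pad n (fun _ => y)) (fun _ => z) <= Rmax (d y z) (q ^ n * d x z).
Proof.
  pose proof Hmet as [Hnn _].
  apply dsq_le_ub. intros i. unfold pad. destruct (Nat.ltb i n) eqn:E.
  - pose proof (pow_le_pow_le_1 q 0 i ltac:(lra) (Nat.le_0_l i)). simpl in *.
    pose proof (pow_le q i ltac:(lra)). pose proof (Hnn y z).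
    eapply Rle_trans; [|apply Rmax_l]. nra.
  - apply Nat.ltb_ge in E. pose proof (pow_le_pow_le_1 q n i ltac:(lra) E).
    pose proof (Hnn x z). eapply Rle_trans; [|apply Rmax_r]. nra.
Qed.

Variable xstar : X.
Hypothesis Hxstar : gen_fixed_point f xstar.
Hypothesis HL1 : L < 1.

Lemma fn_fixed_point_dist (n : nat) (y : X) : fn f x n (fun _ => y) = y ->
  d y xstar <= q ^ n * (L / (1 - L)) * d xstar x.
Proof.
  intros Hy. pose proof Hmet as [Hnn [_ [Hs _]]]. destruct Hf as [HL0 Hlip].
  assert (Hcontr : d y xstar <= L * Rmax (d y xstar) (q ^ n * d x xstar)).
  { replace (d y xstar) with (d (f (pad n (fun _ => y))) (f (fun _ => xstar))) at 1
      by (rewrite <- fn_pad, Hy, Hxstar; reflexivity).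
    assert (Hconst : bounded_seq d (fun _ : nat => xstar)).
    { exists 0. intros. rewrite (metric_dist_refl d _ Hmet). lra. }
    eapply Rle_trans; [apply Hlip; [apply pad_bounded | exact Hconst]|].
    apply Rmult_le_compat_l; [exact HL0 | apply dsq_pad_const_le]. }
  pose proof (pow_le q n ltac:(lra)). pose proof (Hnn x xstar).
  apply contraction_max_bound in Hcontr; [|lra | apply Hnn | nra].
  assert (L <= L / (1 - L)).
  { apply Rmult_le_reg_r with (1 - L); [lra|].
    unfold Rdiv. rewrite Rmult_assoc, Rinv_l by lra. nra. }
  replace (q ^ n * (L / (1 - L)) * d xstar x) with (L / (1 - L) * (q ^ n * d x xstar))
    by (rewrite (Hs xstar x); ring).
  eapply Rle_trans; [exact Hcontr|]. apply Rmult_le_compat_r; [nra | assumption].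
Qed.

Lemma fn_fixed_points_converge (xs : nat -> X) :
  (forall n, (1 <= n)%nat -> fn f x n (fun _ => xs n) = xs n) -> converges_to d xs xstar.
Proof.
  intros Hxs eps Heps. pose proof Hmet as [Hnn _]. destruct Hf as [HL0 _].
  assert (HC : 0 <= L / (1 - L) * d xstar x).
  { apply Rmult_le_pos; [|apply Hnn].
    apply Rmult_le_pos; [exact HL0 | left; apply Rinv_0_lt_compat; lra]. }
  destruct (geometric_eventually_lt q _ eps ltac:(lra) HC Heps) as [N HN].
  exists (Nat.max N 1). intros n Hn.
  eapply Rle_lt_trans; [apply (fn_fixed_point_dist n), Hxs; lia|].
  rewrite Rmult_assoc. apply HN. lia.
Qed.

End Truncation.

Theorem mainTheorem15 (X : Type) (d : X -> X -> R)
  (Hmet : is_metric d) (Hcomp : complete d)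
  (f : (nat -> X) -> X) (q L : R) (Hq0 : 0 < q) (Hq1 : q < 1)
  (HL : is_Lsq d q f L) (HL1 : L < 1)
  (xstar : X) (Hxstar : gen_contractive_fixed_point d f xstar)
  (x : X) :
  (forall n : nat, (1 <= n)%nat ->
     (exists Ln, is_lip_const (fun _ => True) (dmax d n) d (fn f x n) Ln /\ Ln <= L) /\
     (exists! y, fn f x n (fun _ => y) = y) /\
     (forall y, fn f x n (fun _ => y) = y ->
        d y xstar <= q ^ n * (L / (1 - L)) * d xstar x)) /\
  (forall xs : nat -> X,
     (forall n, (1 <= n)%nat -> fn f x n (fun _ => xs n) = xs n) ->
     converges_to d xs xstar).
Proof.
  destruct HL as [Hf _]. destruct Hxstar as [Hfix _].
  pose proof (proj1 Hf) as HL0. pose proof (proj1 Hmet) as Hnn.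
  split.
  - intros n Hn.
    pose proof (fun a b => fn_diag_contraction _ _ Hmet _ _ _ x Hq0 Hq1 Hf n a b Hn) as Hcontr.
    split; [|split].
    + apply is_lip_const_exists; [apply dmax_ge0 | exact Hnn |].
      split; [exact HL0|]. intros v w _ _. exact (fn_lipschitz _ _ Hmet _ _ _ x Hq0 Hq1 Hf n v w).
    + destruct (contraction_has_fixed_point _ _ Hmet _ _ HL0 HL1 Hcontr Hcomp x) as [y Hy].
      exists y. split; [exact Hy|].
      intros y'. exact (contraction_fixed_point_unique _ _ Hmet _ _ HL1 Hcontr y y' Hy).
    + exact (fn_fixed_point_dist _ _ Hmet _ _ _ x Hq0 Hq1 Hf _ Hfix HL1 n).
  - exact (fn_fixed_points_converge _ _ Hmet _ _ _ x Hq0 Hq1 Hf _ Hfix HL1).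
Qed.
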